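(* Let $\Gamma=(V,E)$ and $\Gamma'=(V',E')$ be layered graphs with unique minimal vertices such that $\Gamma\sim_A\Gamma'$. Then $|V_i|=|V_i'|$ for all $i\in\mathbb N$.
   Context: A layered graph is a finite directed graph $\Gamma=(V,E)$ with $V=\bigsqcup_{i=0}^{N}V_i$ such that every edge from $V_i$ goes to $V_{i-1}$; $|v|=i$ for $v\in V_i$, $V_+=\bigsqcup_{i\ge1}V_i$, every vertex in $V_+$ has at least one outgoing edge, and unique minimal vertex means $|V_0|=1$. The universal labeling algebra $A(\Gamma)$ is presented as $T(V_+)/R_V$ (free algebra on $V_+$ over a field $\mathbb F$ modulo an ideal $R_V$ which is homogeneous for the polynomial degree). The degree grading of $A(\Gamma)$ is $A(\Gamma)_{[i]}$ = span of images of monomials $v_1\cdots v_i$ ($v_j\in V_+$). The vertex filtration is $A(\Gamma)_i$ = span of images of monomials $v_1\cdots v_j$ with $\sum_k|v_k|\le i$. One writes $\Gamma\sim_A\Gamma'$ if there is an algebra isomorphism $A(\Gamma)\to A(\Gamma')$ preserving both the degree grading and the vertex filtration. *)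

From HB Require Import structures.
From mathcomp Require Import all_boot all_order all_algebra.
Set Implicit Arguments. Unset Strict Implicit. Unset Printing Implicit Defensive.
Import GRing.Theory.
Local Open Scope ring_scope.

(* An element of the free associative algebra F<X> is represented by a formal
   finite linear combination of words; two representatives are identified
   when all their coefficients agree ([ncp_eq]). *)
Section NCPoly.
Variables (F : fieldType).

Definition ncp (X : Type) := seq (F * seq X).

Definition ncp_coef (X : eqType) (p : ncp X) (w : seq X) : F :=
  \sum_(cw <- p | cw.2 == w) cw.1.

Definition ncp_eq (X : eqType) (p q : ncp X) : Prop :=
  forall w, ncp_coef p w = ncp_coef q w.

Definition ncp_zero (X : Type) : ncp X := [::].
Definition ncp_one (X : Type) : ncp X := [:: (1, [::])].
Definition ncp_var (X : Type) (x : X) : ncp X := [:: (1, [:: x])].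
Definition ncp_add (X : Type) (p q : ncp X) : ncp X := p ++ q.
Definition ncp_scale (X : Type) (c : F) (p : ncp X) : ncp X :=
  [seq (c * cw.1, cw.2) | cw <- p].
Definition ncp_sub (X : Type) (p q : ncp X) : ncp X :=
  ncp_add p (ncp_scale (-1) q).
Definition ncp_mul (X : Type) (p q : ncp X) : ncp X :=
  [seq (a.1 * b.1, a.2 ++ b.2) | a <- p, b <- q].
Definition ncp_prod (X : Type) (ps : seq (ncp X)) : ncp X :=
  foldr (@ncp_mul X) (ncp_one X) ps.
Definition ncp_sum (X : Type) (ps : seq (ncp X)) : ncp X :=
  foldr (@ncp_add X) (ncp_zero X) ps.

Definition ncp_subst (X Y : Type) (f : X -> ncp Y) (p : ncp X) : ncp Y :=
  flatten [seq ncp_scale cw.1 (ncp_prod (map f cw.2)) | cw <- p].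

Inductive in_ideal (X : eqType) (G : ncp X -> Prop) : ncp X -> Prop :=
| ideal_zero p : (forall w, ncp_coef p w = 0) -> in_ideal G p
| ideal_gen r : G r -> in_ideal G r
| ideal_add p q : in_ideal G p -> in_ideal G q -> in_ideal G (ncp_add p q)
| ideal_mull a p : in_ideal G p -> in_ideal G (ncp_mul a p)
| ideal_mulr p a : in_ideal G p -> in_ideal G (ncp_mul p a)
| ideal_eq p q : in_ideal G p -> ncp_eq p q -> in_ideal G q.

End NCPoly.

(* Vertices V, edges E (multi-edges allowed), level |v| = lev v,
   an edge e goes from src e to tgt e. *)
Record lgraph := LGraph {
  lg_V : finType;
  lg_E : finType;
  lg_lev : lg_V -> nat;
  lg_src : lg_E -> lg_V;
  lg_tgt : lg_E -> lg_V }.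

Definition layered_umv (G : lgraph) : Prop :=
  [/\ (forall e : lg_E G, lg_lev (lg_src e) = (lg_lev (lg_tgt e)).+1),
      (forall v : lg_V G, (0 < lg_lev v)%N -> exists e : lg_E G, lg_src e = v)
    & #|[set v : lg_V G | lg_lev v == 0%N]| = 1%N].

Definition layer (G : lgraph) (i : nat) : {set lg_V G} :=
  [set v : lg_V G | lg_lev v == i].

Fixpoint gpath (G : lgraph) (v : lg_V G) (pi : seq (lg_E G)) (u : lg_V G) : bool :=
  match pi with
  | [::] => v == u
  | e :: pi' => (lg_src e == v) && gpath (lg_tgt e) pi' u
  end.

Section UnivLabel.
Variables (F : fieldType) (G : lgraph).
Local Notation E := (lg_E G).

(* elementary symmetric (ordered) functions of a path:
   (t - e1)(t - e2)...(t - ek) = sum_j (-1)^j elem j pi t^(k-j) *)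
Fixpoint path_elem (j : nat) (pi : seq E) : ncp F E :=
  match j, pi with
  | 0%N, _ => ncp_one F E
  | j'.+1, [::] => ncp_zero F E
  | j'.+1, e :: pi' =>
      ncp_add (ncp_mul (ncp_var F e) (path_elem j' pi')) (path_elem j pi')
  end.

(* defining relations of the universal labeling algebra A(G) = T(E)/R:
   coefficients of P_{pi1}(t) - P_{pi2}(t) for paths with same origin and end *)
Definition ula_rel (r : ncp F E) : Prop :=
  exists (v u : lg_V G) (pi1 pi2 : seq E) (j : nat),
    [/\ gpath v pi1 u, gpath v pi2 u & r = ncp_sub (path_elem j pi1) (path_elem j pi2)]%type.

Definition ula_ideal : ncp F E -> Prop := in_ideal ula_rel.

(* congruence modulo R: p and q have the same image in A(G) *)
Definition ula_cong (p q : ncp F E) : Prop := ula_ideal (ncp_sub p q).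

(* A path from v in V_+ down to the minimal vertex; its edge-sum is the image
   of the vertex v in A(G) (well defined modulo R), and its length is |v|. *)
Definition down_path (pi : seq E) : Prop :=
  exists v u : lg_V G, [/\ gpath v pi u, (0 < lg_lev v)%N & lg_lev u = 0%N].

Definition path_sum (pi : seq E) : ncp F E := ncp_sum [seq ncp_var F e | e <- pi].

(* image of the monomial v_1 ... v_j given by down-paths ps = (pi_1,...,pi_j) *)
Definition vmono (ps : seq (seq E)) : ncp F E := ncp_prod [seq path_sum pi | pi <- ps].

Definition in_vspan (P : seq (seq E) -> Prop) (p : ncp F E) : Prop :=
  exists L : seq (F * seq (seq E)),
    (forall x, x \in L -> (forall pi, pi \in x.2 -> down_path pi) /\ P x.2) /\
    ula_cong p (ncp_sum [seq ncp_scale x.1 (vmono x.2) | x <- L]).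

Definition in_deg (i : nat) (p : ncp F E) : Prop :=
  in_vspan (fun ps => size ps = i) p.

Definition in_filt (i : nat) (p : ncp F E) : Prop :=
  in_vspan (fun ps => (sumn [seq size pi | pi <- ps] <= i)%N) p.

End UnivLabel.

(* G ~_A G' : an F-algebra isomorphism A(G) -> A(G') (given by lifts f, g of
   it and its inverse to the free algebras) such that it and its inverse
   preserve the degree grading and the vertex filtration. *)
Definition sim_A (F : fieldType) (G G' : lgraph) : Prop :=
  exists (f : lg_E G -> ncp F (lg_E G')) (g : lg_E G' -> ncp F (lg_E G)),
  (forall r, @ula_rel F G r -> @ula_ideal F G' (ncp_subst f r)) /\
  (forall r, @ula_rel F G' r -> @ula_ideal F G (ncp_subst g r)) /\
  (forall e, @ula_cong F G (ncp_subst g (f e)) (ncp_var F e)) /\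
  (forall e', @ula_cong F G' (ncp_subst f (g e')) (ncp_var F e')) /\
  (forall i p, @in_deg F G i p -> @in_deg F G' i (ncp_subst f p)) /\
  (forall i p, @in_deg F G' i p -> @in_deg F G i (ncp_subst g p)) /\
  (forall i p, @in_filt F G i p -> @in_filt F G' i (ncp_subst f p)) /\
  (forall i p, @in_filt F G' i p -> @in_filt F G i (ncp_subst g p)).

From mathcomp Require Import all_boot all_order all_algebra.
From mathcomp Require Import ring zify.
Set Implicit Arguments. Unset Strict Implicit. Unset Printing Implicit Defensive.
Import GRing.Theory.
Local Open Scope ring_scope.

(* For a layered graph G and a vertex w let incid w be the edge weight
   1 on edges leaving w and -1 on edges entering w; its sum along a path
   v -> u is [v = w] - [u = w], independently of the path.  Weighting the
   coefficients of the one-letter words by such a path independent weight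
   gives a linear form on T(E) which, together with the constant term,
   vanishes on the defining ideal R, i.e. a form on A(G).  On the image of a
   vertex v (the edge sum of a down-path) the form of w >= 1 equals [v = w],
   and on the filtration step A(G)_i it vanishes when |w| > i.

   Let f, g realise G ~_A G'.  For v0 in G the form incid v0, pulled back
   along g to the edges of G', is again path independent, hence a difference
   of potentials K on the vertices of G', hence the combination
   sum_w K w * incid w of incidence forms of G'.  Evaluating on f(v) for
   0 < |v| <= i yields A *m B = 1 with A = [incid w (f v)] of size
   #V_{1..i} x #V'_{1..i}; so #V_{1..i} <= #V'_{1..i}.  By symmetry the two
   counts agree for every i, and the layers are their successive differences. *)

(* Only two pieces of a
   polynomial matter in this development: its constant term [cst p] and its
   coefficients of one-letter words [lcoef p x]. *)
Section Coefficients.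
Variables (F : fieldType) (X : eqType).
Implicit Types (p q : ncp F X) (w : seq X).

Definition cst p : F := ncp_coef p [::].
Definition lcoef p (x : X) : F := ncp_coef p [:: x].

Lemma coef_nil w : ncp_coef ([::] : ncp F X) w = 0.
Proof. by rewrite /ncp_coef big_nil. Qed.

Lemma coef_cons (a : F * seq X) p w :
  ncp_coef (a :: p) w = (if a.2 == w then a.1 else 0) + ncp_coef p w.
Proof. by rewrite /ncp_coef big_cons; case: ifP; rewrite ?add0r. Qed.

Lemma coef_add p q w : ncp_coef (ncp_add p q) w = ncp_coef p w + ncp_coef q w.
Proof. by rewrite /ncp_coef big_cat. Qed.

Lemma coef_scale c p w : ncp_coef (ncp_scale c p) w = c * ncp_coef p w.
Proof.
elim: p => [|a p IH]; first by rewrite /= !coef_nil mulr0.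
rewrite /= !coef_cons -/(ncp_scale c p) IH mulrDr /=.
by case: ifP; rewrite ?mulr0.
Qed.

Lemma coef_sub p q w : ncp_coef (ncp_sub p q) w = ncp_coef p w - ncp_coef q w.
Proof. by rewrite coef_add coef_scale mulN1r. Qed.

Lemma coef_var (x : X) w : ncp_coef (ncp_var F x) w = ([:: x] == w)%:R.
Proof. by rewrite coef_cons coef_nil addr0 /=; case: eqP. Qed.

Lemma coef_one w : ncp_coef (ncp_one F X) w = ([::] == w)%:R.
Proof. by rewrite coef_cons coef_nil addr0 /=; case: eqP. Qed.

Lemma ncp_mul_cons (a : F * seq X) p q :
  ncp_mul (a :: p) q = [seq (a.1 * b.1, a.2 ++ b.2) | b <- q] ++ ncp_mul p q.
Proof. by []. Qed.

Lemma coef_mul1 p w : ncp_coef (ncp_mul p (ncp_one F X)) w = ncp_coef p w.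
Proof.
elim: p => [|a p IH]; first by rewrite /ncp_mul /= !coef_nil.
by rewrite ncp_mul_cons /= coef_cons IH coef_cons mulr1 cats0.
Qed.

Local Notation term_mul a1 a2 q := [seq (a1 * b.1, a2 ++ b.2) | b <- q].

Lemma cst_term_mul a1 a2 q :
  cst (term_mul a1 a2 q) = if a2 is [::] then a1 * cst q else 0.
Proof.
rewrite /cst; elim: q => [|b q IH].
  by rewrite /= !coef_nil; case: a2; rewrite ?mulr0.
rewrite /= !coef_cons IH /= {IH}; case: a2 => [|x s] /=; last by rewrite addr0.
by case: ifP; rewrite ?mulrDr ?mulr0.
Qed.

Lemma lcoef_term_mul a1 a2 q y :
  lcoef (term_mul a1 a2 q) y =
  match a2 with
  | [::] => a1 * lcoef q y
  | [:: x] => if x == y then a1 * cst q else 0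
  | _ => 0
  end.
Proof.
rewrite /lcoef /cst; elim: q => [|b q IH].
  by rewrite /= !coef_nil; case: a2 => [|x [|]]; rewrite ?mulr0 //; case: ifP.
rewrite /= !coef_cons IH /= {IH}; case: a2 => [|x [|x' s]] /=.
- by case: ifP; rewrite ?mulrDr ?mulr0.
- rewrite eqseq_cons; case: (x == y) => /=; last by rewrite addr0.
  by case: ifP; rewrite ?mulrDr ?mulr0.
- by rewrite eqseq_cons andbF addr0.
Qed.

Lemma cst_mul p q : cst (ncp_mul p q) = cst p * cst q.
Proof.
elim: p => [|a p IH]; first by rewrite /cst /ncp_mul /= coef_nil mul0r.
rewrite ncp_mul_cons /cst coef_add -/(cst _) cst_term_mul -/(cst _) IH.
rewrite coef_cons -/(cst p).
by case: a => a1 [|x s] /=; rewrite -/(cst q) ?mulrDl ?mul0r ?add0r.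
Qed.

Lemma lcoef_mul p q y : lcoef (ncp_mul p q) y = cst p * lcoef q y + lcoef p y * cst q.
Proof.
elim: p => [|a p IH]; first by rewrite /cst /lcoef /ncp_mul /= !coef_nil !mul0r addr0.
rewrite ncp_mul_cons /lcoef coef_add -/(lcoef _ _) lcoef_term_mul -/(lcoef _ _) IH.
rewrite /cst !coef_cons -/(cst p) -/(lcoef p y) -/(cst q) -/(lcoef q y).
case: a => a1 [|x [|x' s]] /=.
- ring.
- rewrite eqseq_cons andbT; case: ifP => _; ring.
- rewrite eqseq_cons andbF; ring.
Qed.

Lemma cst_prod (T : Type) (h : T -> ncp F X) (s : seq T) :
  (forall t, cst (h t) = 0) -> cst (ncp_prod (map h s)) = if s is [::] then 1 else 0.
Proof.
move=> h0; case: s => [|t s] /=; first by rewrite /cst coef_one.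
by rewrite cst_mul h0 mul0r.
Qed.

Lemma lcoef_prod (T : Type) (h : T -> ncp F X) (s : seq T) y :
  (forall t, cst (h t) = 0) ->
  lcoef (ncp_prod (map h s)) y = if s is [:: t] then lcoef (h t) y else 0.
Proof.
move=> h0; case: s => [|t s] /=; first by rewrite /lcoef coef_one.
rewrite lcoef_mul h0 mul0r add0r cst_prod //.
by case: s => [|t' s]; rewrite ?mulr1 ?mulr0.
Qed.

End Coefficients.

Section LinearForm.
Variables (F : fieldType).

Definition lform (X : finType) (k : X -> F) (p : ncp F X) : F :=
  \sum_(x : X) lcoef p x * k x.

Section Basics.
Variables (X : finType) (k : X -> F).
Implicit Types p q : ncp F X.

Lemma lform_ext p q : (forall w, ncp_coef p w = ncp_coef q w) -> lform k p = lform k q.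
Proof. by move=> pq; apply: eq_bigr => x _; rewrite /lcoef pq. Qed.

Lemma lform_add p q : lform k (ncp_add p q) = lform k p + lform k q.
Proof. by rewrite /lform -big_split; apply: eq_bigr => x _; rewrite /lcoef coef_add mulrDl. Qed.

Lemma lform_scale c p : lform k (ncp_scale c p) = c * lform k p.
Proof. by rewrite /lform mulr_sumr; apply: eq_bigr => x _; rewrite /lcoef coef_scale mulrA. Qed.

Lemma lform_sub p q : lform k (ncp_sub p q) = lform k p - lform k q.
Proof. by rewrite lform_add lform_scale mulN1r. Qed.

Lemma lform_zero : lform k (ncp_zero F X) = 0.
Proof. by rewrite /lform big1 // => x _; rewrite /lcoef coef_nil mul0r. Qed.

Lemma lform_one : lform k (ncp_one F X) = 0.
Proof. by rewrite /lform big1 // => x _; rewrite /lcoef coef_one mul0r. Qed.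

Lemma lform_var x : lform k (ncp_var F x) = k x.
Proof.
rewrite /lform (bigD1 x) //= big1 ?addr0; first by rewrite /lcoef coef_var eqxx mul1r.
by move=> y /negbTE yx; rewrite /lcoef coef_var eqseq_cons eq_sym yx mul0r.
Qed.

Lemma lform_mul p q : lform k (ncp_mul p q) = cst p * lform k q + lform k p * cst q.
Proof.
rewrite /lform mulr_sumr mulr_suml -big_split; apply: eq_bigr => x _.
rewrite lcoef_mul /=; ring.
Qed.

End Basics.

Section Substitution.
Variables (X Y : finType) (h : X -> ncp F Y).
Hypothesis h_cst : forall x, cst (h x) = 0.

Lemma lcoef_subst p y : lcoef (ncp_subst h p) y = \sum_(x : X) lcoef p x * lcoef (h x) y.
Proof.
have sum_single (a : F) (s : seq X) :
    \sum_(x : X) (if s == [:: x] then a else 0) * lcoef (h x) y =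
    if s is [:: x0] then a * lcoef (h x0) y else 0.
  case: s => [|x0 [|x1 s]].
  - by rewrite big1 // => x _; rewrite mul0r.
  - rewrite (bigD1 x0) //= eqxx big1 ?addr0 // => x /negbTE xx0.
    by rewrite eqseq_cons eq_sym xx0 mul0r.
  - by rewrite big1 // => x _; rewrite eqseq_cons /= andbF mul0r.
elim: p => [|a p IH].
  by rewrite /lcoef /ncp_subst /= coef_nil big1 // => x _; rewrite coef_nil mul0r.
rewrite /ncp_subst /= /lcoef coef_add -/(ncp_subst h p); move: IH; rewrite /lcoef => ->.
rewrite coef_scale; have := lcoef_prod (h := h) a.2 y h_cst; rewrite /lcoef => ->.
under eq_bigr => x _ do rewrite coef_cons mulrDl.
rewrite big_split /= sum_single addrC.
by case: a => a1 [|x0 [|x1 s]] /=; rewrite ?mulr0 ?add0r ?addr0 // addrC.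
Qed.

Lemma lform_subst (k : Y -> F) p :
  lform k (ncp_subst h p) = lform (fun x => lform k (h x)) p.
Proof.
rewrite /lform.
under eq_bigr => y _ do rewrite lcoef_subst mulr_suml.
rewrite exchange_big /=; apply: eq_bigr => x _.
by rewrite mulr_sumr; apply: eq_bigr => y _; rewrite mulrA.
Qed.

End Substitution.

(* If the constant term and a weighted linear part vanish on the generators
   of a two-sided ideal, they vanish on the whole ideal: both are killed by
   multiplication with arbitrary polynomials thanks to the Leibniz rules. *)
Lemma ideal_forms (X : finType) (R : ncp F X -> Prop) (k : X -> F) r :
  (forall r, R r -> cst r = 0 /\ lform k r = 0) ->
  in_ideal R r -> cst r = 0 /\ lform k r = 0.
Proof.
move=> gen_forms; elim => {r}.
- move=> p p0; split; first by rewrite /cst p0.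
  by rewrite /lform big1 // => x _; rewrite /lcoef p0 mul0r.
- by move=> r /gen_forms.
- move=> p q _ [p1 p2] _ [q1 q2]; split; last by rewrite lform_add p2 q2 addr0.
  by rewrite /cst coef_add -!/(cst _) p1 q1 addr0.
- move=> a p _ [p1 p2]; split; first by rewrite cst_mul p1 mulr0.
  by rewrite lform_mul p1 p2 !mulr0 addr0.
- move=> p a _ [p1 p2]; split; first by rewrite cst_mul p1 mul0r.
  by rewrite lform_mul p1 p2 !mul0r addr0.
- move=> p q _ [p1 p2] pq; split; first by rewrite /cst -pq.
  by rewrite -p2; apply: lform_ext => w; rewrite pq.
Qed.

End LinearForm.

(* A weight
   [k : E -> F] is path independent when its sum along a path depends only on
   the endpoints of the path; for such k, [cst] and [lform k] vanish on the
   defining relations (only the coefficient of t^(n-1) in P_pi(t) is linear,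
   and it is the edge sum of pi), hence they are well defined on A(G). *)
Section GraphForms.
Variables (F : fieldType) (G : lgraph).
Local Notation E := (lg_E G).
Local Notation V := (lg_V G).

Definition path_indep (k : E -> F) : Prop :=
  forall (v u : V) (pi1 pi2 : seq E), gpath v pi1 u -> gpath v pi2 u ->
    \sum_(e <- pi1) k e = \sum_(e <- pi2) k e.

Definition incid (w : V) (e : E) : F := (lg_src e == w)%:R - (lg_tgt e == w)%:R.

Lemma incid_path (w v u : V) pi : gpath v pi u ->
  \sum_(e <- pi) incid w e = (v == w)%:R - (u == w)%:R.
Proof.
elim: pi v => [|e pi IH] v /=; first by move/eqP->; rewrite big_nil subrr.
case/andP => /eqP src_e /IH IHe; rewrite big_cons IHe /incid src_e; ring.
Qed.

Lemma incid_path_indep w : path_indep (incid w).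
Proof. by move=> v u pi1 pi2 /(incid_path w) -> /(incid_path w) ->. Qed.

Lemma cst_var (x : E) : cst (ncp_var F x) = 0.
Proof. by rewrite /cst coef_var. Qed.

Lemma cst_path_elem j (pi : seq E) : cst (path_elem F j pi) = (j == 0)%N%:R.
Proof.
elim: pi j => [|e pi IH] [|j] /=; try by rewrite /cst coef_one.
  by rewrite /cst coef_nil.
by rewrite /cst coef_add -!/(cst _) cst_mul cst_var mul0r add0r IH.
Qed.

Lemma lform_path_elem (k : E -> F) j (pi : seq E) :
  lform k (path_elem F j pi) = if j == 1%N then \sum_(e <- pi) k e else 0.
Proof.
elim: pi j => [|e pi IH] [|j] /=; rewrite ?lform_one //.
  by rewrite lform_zero; case: ifP => //; rewrite big_nil.
rewrite lform_add lform_mul cst_var mul0r add0r lform_var cst_path_elem IH big_cons.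
by case: j => [|j] /=; rewrite ?mulr1 ?mulr0 ?add0r ?addr0.
Qed.

Lemma coef_path_sum (pi : seq E) w :
  ncp_coef (path_sum F pi) w = ncp_coef (path_elem F 1 pi) w.
Proof.
elim: pi => [|e pi IH] //.
have -> : path_elem F 1 (e :: pi) =
    ncp_add (ncp_mul (ncp_var F e) (ncp_one F E)) (path_elem F 1 pi) by case: pi {IH}.
by rewrite [LHS]coef_add !coef_add IH coef_mul1.
Qed.

Lemma cst_path_sum (pi : seq E) : cst (path_sum F pi) = 0.
Proof. by rewrite /cst coef_path_sum -/(cst _) cst_path_elem. Qed.

Lemma lform_path_sum (k : E -> F) (pi : seq E) :
  lform k (path_sum F pi) = \sum_(e <- pi) k e.
Proof. by rewrite (lform_ext _ (coef_path_sum pi)) lform_path_elem. Qed.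

Section PathIndependent.
Variables (k : E -> F).
Hypothesis k_indep : path_indep k.

Lemma ula_ideal_forms r : @ula_ideal F G r -> cst r = 0 /\ lform k r = 0.
Proof.
apply: ideal_forms => _ [v [u [pi1 [pi2 [j [path1 path2 ->]]]]]].
split; first by rewrite /cst coef_sub -!/(cst _) !cst_path_elem subrr.
rewrite lform_sub !lform_path_elem; case: ifP => _; last by rewrite subrr.
by rewrite (k_indep path1 path2) subrr.
Qed.

Lemma cong_lform p q : @ula_cong F G p q -> lform k p = lform k q.
Proof.
by case/ula_ideal_forms => _; rewrite lform_sub => /eqP; rewrite subr_eq0 => /eqP.
Qed.

End PathIndependent.

Lemma cong_cst p q : @ula_cong F G p q -> cst p = cst q.
Proof.
have zero_indep : path_indep (fun _ => 0) by move=> *; rewrite !big1.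
case/(ula_ideal_forms zero_indep) => + _.
by rewrite /cst coef_sub => /eqP; rewrite subr_eq0 => /eqP.
Qed.

Lemma lform_potential (k : E -> F) (K : V -> F) p :
  (forall e, k e = K (lg_src e) - K (lg_tgt e)) ->
  lform k p = \sum_(w : V) lform (incid w) p * K w.
Proof.
move=> kK; rewrite /lform.
under [RHS]eq_bigr => w _ do rewrite mulr_suml.
rewrite exchange_big /=; apply: eq_bigr => e _.
have delta (a : V) : \sum_(w : V) (a == w)%:R * K w = K a.
  rewrite (bigD1 a) //= eqxx mul1r big1 ?addr0 // => w /negbTE.
  by rewrite eq_sym => ->; rewrite mul0r.
under eq_bigr => w _ do rewrite /incid -mulrA mulrBl.
by rewrite -mulr_sumr sumrB !delta kK.
Qed.

End GraphForms.
Arguments incid {F G} w e.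

Section VertexSpans.
Variables (F : fieldType) (G : lgraph).
Local Notation E := (lg_E G).
Local Notation V := (lg_V G).
Local Notation lev := (@lg_lev G).

Lemma cst_vmono (ps : seq (seq E)) : cst (vmono F ps) = if ps is [::] then 1 else 0.
Proof. by rewrite /vmono cst_prod // => pi; apply: cst_path_sum. Qed.

Lemma lform_vmono k (ps : seq (seq E)) :
  lform k (vmono F ps) = if ps is [:: pi] then \sum_(e <- pi) k e else 0.
Proof.
have lcoef_vmono y : lcoef (vmono F ps) y =
    if ps is [:: pi] then lcoef (path_sum F pi) y else 0.
  by rewrite /vmono lcoef_prod // => pi; apply: cst_path_sum.
rewrite /lform; under eq_bigr => x _ do rewrite lcoef_vmono.
case: ps {lcoef_vmono} => [|pi [|pi' ps]]; last 2 first.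
- by rewrite -lform_path_sum.
- by rewrite big1 // => x _; rewrite mul0r.
by rewrite big1 // => x _; rewrite mul0r.
Qed.

Definition vcomb (L : seq (F * seq (seq E))) : ncp F E :=
  ncp_sum [seq ncp_scale x.1 (vmono F x.2) | x <- L].

Lemma coef_vcomb_cons x L w :
  ncp_coef (vcomb (x :: L)) w = x.1 * ncp_coef (vmono F x.2) w + ncp_coef (vcomb L) w.
Proof. by rewrite /vcomb /= coef_add coef_scale. Qed.

Lemma coef_vmono1 (pi : seq E) w : ncp_coef (vmono F [:: pi]) w = ncp_coef (path_sum F pi) w.
Proof. exact: coef_mul1. Qed.

Lemma coef_path_sum_cons (e : E) pi w :
  ncp_coef (path_sum F (e :: pi)) w = ncp_coef (ncp_var F e) w + ncp_coef (path_sum F pi) w.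
Proof. exact: coef_add. Qed.

Lemma cst_vcomb L : cst (vcomb L) = \sum_(x <- L) x.1 * cst (vmono F x.2).
Proof.
elim: L => [|x L IH]; first by rewrite big_nil /cst coef_nil.
by rewrite big_cons -IH /vcomb /= /cst coef_add coef_scale.
Qed.

Lemma lform_vcomb k L : lform k (vcomb L) = \sum_(x <- L) x.1 * lform k (vmono F x.2).
Proof.
elim: L => [|x L IH]; first by rewrite big_nil lform_zero.
by rewrite big_cons -IH /vcomb /= lform_add lform_scale.
Qed.

Lemma in_vspan_forms P p : in_vspan P p -> exists L : seq (F * seq (seq E)),
  (forall x, x \in L -> (forall pi, pi \in x.2 -> down_path pi) /\ P x.2) /\
  cst p = \sum_(x <- L) x.1 * cst (vmono F x.2) /\
  forall w, lform (incid w) p = \sum_(x <- L) x.1 * lform (incid w) (vmono F x.2).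
Proof.
case=> L [HL pL]; exists L; split => //; split.
  by rewrite -cst_vcomb; apply: cong_cst pL.
by move=> w; rewrite -lform_vcomb; apply: cong_lform pL; apply: incid_path_indep.
Qed.

Lemma deg1_cst p : @in_deg F G 1 p -> cst p = 0.
Proof.
case/in_vspan_forms => L [HL [-> _]]; rewrite big_seq big1 // => x /HL [_].
by rewrite cst_vmono; case: x.2 => // _ [] // _; rewrite mulr0.
Qed.

Hypothesis lev_edge : forall e : E, lev (lg_src e) = (lev (lg_tgt e)).+1.

Lemma lev_path v pi u : gpath v pi u -> lev v = (size pi + lev u)%N.
Proof.
elim: pi v => [|e pi IH] v /=; first by move/eqP->.
by case/andP => /eqP <- /IH; rewrite lev_edge => ->.
Qed.

Lemma filt_incid i q w : @in_filt F G i q -> (i < lev w)%N -> lform (incid w) q = 0.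
Proof.
move=> qi iw; case/in_vspan_forms: qi => L [HL [_ ->]].
rewrite big_seq big1 // => x /HL [xdown].
rewrite lform_vmono; case Ex: x.2 => [|pi [|]] //; rewrite ?mulr0 //= addn0 => size_pi.
have [v [u [path_pi _ lev_u]]] : down_path pi by apply: xdown; rewrite Ex mem_head.
rewrite (incid_path F w path_pi).
have /negbTE -> : v != w.
  by apply/eqP => vw; move: iw; rewrite -vw (lev_path path_pi) lev_u addn0 ltnNge size_pi.
have /negbTE -> : u != w by apply/eqP => uw; move: iw; rewrite -uw lev_u.
by rewrite subrr mulr0.
Qed.

Hypothesis out_edge : forall v : V, (0 < lev v)%N -> exists e : E, lg_src e = v.

Lemma down_exists v : exists pi u, gpath v pi u /\ lev u = 0%N.
Proof.
move Hn: (lev v) => n; elim: n v Hn => [|n IH] v lev_v.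
  by exists [::], v; rewrite /= eqxx.
have [e src_e] : exists e : E, lg_src e = v by apply: out_edge; rewrite lev_v.
have lev_tgt : lev (lg_tgt e) = n by apply: succn_inj; rewrite -lev_edge src_e.
have [pi [u [path_pi lev_u]]] := IH _ lev_tgt.
by exists (e :: pi), u; rewrite /= src_e eqxx path_pi.
Qed.

Lemma path_sum_filt i pi : down_path pi -> (size pi <= i)%N -> @in_filt F G i (path_sum F pi).
Proof.
move=> pi_down size_pi; exists [:: (1, [:: pi])]; split.
  move=> x; rewrite inE => /eqP -> /=; split; last by rewrite addn0.
  by move=> pi'; rewrite inE => /eqP ->.
apply: ideal_zero => w.
by rewrite coef_sub -/(vcomb _) coef_vcomb_cons coef_vmono1 coef_nil /= addr0 mul1r subrr.
Qed.

(* Every generator is of degree one: an edge x is the difference of the images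
   of its source and of its target (the latter being 0 at level 0). *)
Lemma var_deg1 (x : E) : @in_deg F G 1 (ncp_var F x).
Proof.
case lev_t: (lev (lg_tgt x)) => [|n].
  exists [:: (1, [:: [:: x]])]; split.
    move=> y; rewrite inE => /eqP -> /=; split => // pi'; rewrite inE => /eqP ->.
    by exists (lg_src x), (lg_tgt x); rewrite /= !eqxx lev_edge lev_t.
  apply: ideal_zero => w.
  rewrite coef_sub -/(vcomb _) coef_vcomb_cons coef_vmono1 coef_path_sum_cons /=.
  by rewrite !coef_nil; ring.
have [pi [u [path_pi lev_u]]] := down_exists (lg_tgt x).
exists [:: (1, [:: x :: pi]); (-1, [:: pi])]; split.
  move=> y; rewrite !inE => /orP [] /eqP -> /=; split => // pi'; rewrite inE => /eqP ->.
    by exists (lg_src x), u; rewrite /= eqxx path_pi lev_edge.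
  by exists (lg_tgt x), u; rewrite lev_t.
apply: ideal_zero => w.
rewrite coef_sub -/(vcomb _) !coef_vcomb_cons !coef_vmono1 coef_path_sum_cons /=.
by rewrite coef_nil; ring.
Qed.

End VertexSpans.

Section DownPaths.
Variables (G : lgraph).
Hypothesis layered_G : layered_umv G.
Local Notation E := (lg_E G).
Local Notation V := (lg_V G).
Local Notation lev := (@lg_lev G).

Lemma lev0_uniq (u u' : V) : lev u = 0%N -> lev u' = 0%N -> u = u'.
Proof.
case: layered_G => _ _ /eqP /cards1P [x min_x] lev_u lev_u'.
have : u \in [set v : V | lev v == 0%N] by rewrite inE lev_u.
have : u' \in [set v : V | lev v == 0%N] by rewrite inE lev_u'.
by rewrite min_x !inE => /eqP -> /eqP ->.
Qed.

Lemma ex_dpath (v : V) : exists pi : seq E, [exists u, gpath v pi u && (lev u == 0%N)].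
Proof.
case: layered_G => lev_edge out_edge _.
have [pi [u [path_pi lev_u]]] := down_exists lev_edge out_edge v.
by exists pi; apply/existsP; exists u; rewrite path_pi lev_u.
Qed.

Definition dpath (v : V) : seq E := xchoose (ex_dpath v).

Lemma dpathP (v : V) : exists u, gpath v (dpath v) u /\ lev u = 0%N.
Proof. by have /existsP [u /andP [pu /eqP lu]] := xchooseP (ex_dpath v); exists u. Qed.

Lemma dpath_filt (F : fieldType) (i : nat) (v : V) :
  (0 < lev v <= i)%N -> @in_filt F G i (path_sum F (dpath v)).
Proof.
case/andP => lev_v lev_vi; case: layered_G => lev_edge _ _.
have [u [path_v lev_u]] := dpathP v.
apply: path_sum_filt; first by exists v, u.
by rewrite -(addn0 (size _)) -lev_u -(lev_path lev_edge path_v).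
Qed.

Lemma incid_dpath (F : fieldType) (v w : V) : (0 < lev w)%N ->
  lform (incid w) (path_sum F (dpath v)) = (v == w)%:R.
Proof.
move=> lev_w; have [u [path_v lev_u]] := dpathP v.
rewrite lform_path_sum (incid_path F w path_v).
have /negbTE -> : u != w by apply/eqP => uw; move: lev_w; rewrite -uw lev_u.
by rewrite subr0.
Qed.

Definition potential (F : fieldType) (k : E -> F) (w : V) : F := \sum_(e <- dpath w) k e.

Lemma potential_min (F : fieldType) (k : E -> F) (w : V) :
  lev w = 0%N -> potential k w = 0.
Proof.
case: layered_G => lev_edge _ _ lev_w.
have [u [path_w lev_u]] := dpathP w.
have := lev_path lev_edge path_w; rewrite lev_w lev_u addn0 => /esym/size0nil.
by rewrite /potential => ->; rewrite big_nil.
Qed.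

Lemma path_indep_potential (F : fieldType) (k : E -> F) : path_indep k ->
  forall e, k e = potential k (lg_src e) - potential k (lg_tgt e).
Proof.
move=> k_indep e.
have [ut [path_t lev_ut]] := dpathP (lg_tgt e).
have [us [path_s lev_us]] := dpathP (lg_src e).
have path_e : gpath (lg_src e) (e :: dpath (lg_tgt e)) us.
  by rewrite /= eqxx (lev0_uniq lev_us lev_ut).
rewrite /potential -(k_indep _ _ _ _ path_e path_s) big_cons; ring.
Qed.

End DownPaths.

Definition low_vertices (G : lgraph) (i : nat) : {set lg_V G} :=
  [set v : lg_V G | (0 < lg_lev v <= i)%N].

Section Comparison.
Variables (F : fieldType) (G G' : lgraph).
Hypotheses (layered_G : layered_umv G) (layered_G' : layered_umv G').
Variables (f : lg_E G -> ncp F (lg_E G')) (g : lg_E G' -> ncp F (lg_E G)).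
Hypothesis g_rel : forall r, @ula_rel F G' r -> @ula_ideal F G (ncp_subst g r).
Hypothesis gf_id : forall e, @ula_cong F G (ncp_subst g (f e)) (ncp_var F e).
Hypothesis f_deg : forall i p, @in_deg F G i p -> @in_deg F G' i (ncp_subst f p).
Hypothesis g_deg : forall i p, @in_deg F G' i p -> @in_deg F G i (ncp_subst g p).
Hypothesis f_filt : forall i p, @in_filt F G i p -> @in_filt F G' i (ncp_subst f p).

(* Generators are mapped to degree one, hence to elements without constant term. *)
Lemma f_cst e : cst (f e) = 0.
Proof.
case: layered_G => lev_edge out_edge _.
have := deg1_cst (f_deg (var_deg1 F lev_edge out_edge e)).
by rewrite /cst /ncp_subst /= cats0 coef_scale mul1r coef_mul1.
Qed.

Lemma g_cst e' : cst (g e') = 0.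
Proof.
case: layered_G' => lev_edge out_edge _.
have := deg1_cst (g_deg (var_deg1 F lev_edge out_edge e')).
by rewrite /cst /ncp_subst /= cats0 coef_scale mul1r coef_mul1.
Qed.

Definition pullback (v0 : lg_V G) (e' : lg_E G') : F := lform (incid v0) (g e').

Lemma pullback_indep v0 : path_indep (pullback v0).
Proof.
move=> v u pi1 pi2 path1 path2.
pose r := ncp_sub (path_elem F 1 pi1) (path_elem F 1 pi2).
have r_rel : @ula_rel F G' r by exists v, u, pi1, pi2, 1%N.
have [_] := ula_ideal_forms (incid_path_indep F v0) (g_rel r_rel).
rewrite lform_subst; last exact: g_cst.
by rewrite lform_sub !lform_path_elem /= => /eqP; rewrite subr_eq0 => /eqP.
Qed.

(* Since g o f is the identity on A(G), the pullback of the incidence form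
   of v0 evaluated on f(p) is the incidence form of v0 on p. *)
Lemma pullback_f v0 p : lform (pullback v0) (ncp_subst f p) = lform (incid v0) p.
Proof.
rewrite lform_subst; last exact: f_cst.
apply: eq_bigr => e _; congr (_ * _).
rewrite /pullback -lform_subst; last exact: g_cst.
by rewrite (cong_lform (incid_path_indep F v0) (gf_id e)) lform_var.
Qed.

(* Matrix form of the argument: with q_v the image under f of the vertex v,
   the matrix [lform (incid w) q_v] (v in V_{1..i}, w in V'_{1..i}) has the
   right inverse [potential (pullback v) w]. *)
Lemma card_low_le i : (#|low_vertices G i| <= #|low_vertices G' i|)%N.
Proof.
set n := #|low_vertices G i|; set m := #|low_vertices G' i|.
pose vert (a : 'I_n) := enum_val a.
pose vert' (b : 'I_m) := enum_val b.
pose q (a : 'I_n) := ncp_subst f (path_sum F (dpath layered_G (vert a))).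
pose A : 'M[F]_(n, m) := \matrix_(a, b) lform (incid (vert' b)) (q a).
pose B : 'M[F]_(m, n) := \matrix_(b, a) potential layered_G' (pullback (vert a)) (vert' b).
have vert_low a : (0 < lg_lev (vert a) <= i)%N by have := enum_valP a; rewrite inE.
apply: (@mulmx1_min _ _ _ A B); apply/matrixP => a a0; rewrite !mxE.
set v0 := vert a0; have /andP [lev_v0 _] := vert_low a0.
transitivity (\sum_(w in low_vertices G' i)
                lform (incid w) (q a) * potential layered_G' (pullback v0) w).
  by rewrite [RHS]big_enum_val; apply: eq_bigr => b _; rewrite !mxE.
transitivity (lform (pullback v0) (q a)).
  rewrite (lform_potential _ (path_indep_potential layered_G' (pullback_indep v0))).
  rewrite [RHS](bigID (mem (low_vertices G' i))) /= [X in _ = _ + X]big1 ?addr0 //.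
  move=> w; rewrite inE negb_and -!ltnNge ltnS leqn0 => /orP [/eqP lev_w | lev_w].
    by rewrite potential_min // mulr0.
  have [lev_edge' _ _] := layered_G'.
  by rewrite (filt_incid lev_edge' (f_filt (dpath_filt layered_G F (vert_low a)))) ?mul0r.
rewrite pullback_f incid_dpath // (inj_eq enum_val_inj).
by rewrite eq_sym; case: (a0 == a).
Qed.

End Comparison.

Lemma low_vertices_succ (G : lgraph) j :
  #|low_vertices G j.+1| = (#|low_vertices G j| + #|layer G j.+1|)%N.
Proof.
have low_I : low_vertices G j.+1 :&: low_vertices G j = low_vertices G j.
  by apply/setP => v; rewrite !inE; case: (lg_lev v) => [|l] //=; lia.
have low_D : low_vertices G j.+1 :\: low_vertices G j = layer G j.+1.
  by apply/setP => v; rewrite !inE; case: (lg_lev v) => [|l] //=; lia.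
by rewrite -(cardsID (low_vertices G j) (low_vertices G j.+1)) low_I low_D.
Qed.

Theorem mainTheorem3 (F : fieldType) (G G' : lgraph) :
  layered_umv G -> layered_umv G' -> sim_A F G G' ->
  forall i : nat, #|layer G i| = #|layer G' i|.
Proof.
move=> layered_G layered_G' [f [g [f_rel [g_rel [gf_id [fg_id [f_deg [g_deg [f_filt g_filt]]]]]]]]].
have card_low j : #|low_vertices G j| = #|low_vertices G' j|.
  apply/eqP; rewrite eqn_leq.
  rewrite (card_low_le layered_G layered_G' g_rel gf_id f_deg g_deg f_filt).
  by rewrite (card_low_le layered_G' layered_G f_rel fg_id g_deg f_deg g_filt).
case=> [|j].
  by case: layered_G => _ _ ->; case: layered_G' => _ _ ->.
by have := card_low j.+1; rewrite !low_vertices_succ card_low => /addnI.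
Qed.
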